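(* Consider a football league with $n\ge 2$ teams in which every pair of distinct teams $i\neq j$ plays twice, once at the home ground of each team; let $X_{ij1}$ (resp. $X_{ij0}$) be the number of goals scored by team $i$ against team $j$ in the match at $i$'s (resp. $j$'s) home ground. Suppose every win, draw and loss is awarded $3$, $1$ and $0$ points respectively, and that the $X_{ijk}$, $i\neq j$, $k\in\{0,1\}$, are independent and each follows a Poisson distribution with the same mean $\lambda>0$. Then the league is perfectly balanced.
   Context: The match between team $i$ at home and team $j$ is a win/draw/loss for $i$ according as $X_{ij1}>,=,<X_{ji0}$. For each team $i$, $S_i$ is its total points over all its matches, $GS_i=\sum_{j\neq i}\sum_{k\in\{0,1\}}X_{ijk}$ its total goals scored, $GC_i=\sum_{j\neq i}\sum_{k\in\{0,1\}}X_{jik}$ its total goals conceded, and $GD_i=GS_i-GC_i$ its goal difference. The final standing (an ordering of the $n$ teams) is determined first by $S_i$, then by $GD_i$, then by $GS_i$, with any further ties broken by criteria (such as head-to-head points) that treat the teams symmetrically. A league is called perfectly balanced if every permutation of the teams is equally likely to be the final standing. *)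

From HB Require Import structures.
From mathcomp Require Import all_boot all_order all_algebra all_fingroup.
From mathcomp Require Import all_classical all_reals all_analysis.
Set Implicit Arguments. Unset Strict Implicit. Unset Printing Implicit Defensive.
Import Order.TTheory GRing.Theory Num.Theory.
Local Open Scope ring_scope.

(* A goal table for a league with teams 'I_n:
   x (i, j, true)  = X_{ij1} = goals of i against j at i's home ground,
   x (i, j, false) = X_{ij0} = goals of i against j at j's home ground.
   Diagonal entries (i = i) are meaningless; the outcome space below only
   contains tables whose diagonal is identically 0. *)
Definition table (n : nat) := {ffun 'I_n * 'I_n * bool -> nat}.

Definition valid_table n (x : table n) : Prop :=
  forall (i : 'I_n) (k : bool), x (i, i, k) = 0%N.

Definition match_points (a b : nat) : nat :=
  if (b < a)%N then 3%N else if a == b then 1%N else 0%N.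

Definition points n (x : table n) (i : 'I_n) : nat :=
  (\sum_(j < n | j != i)
     (match_points (x (i, j, true)) (x (j, i, false))
      + match_points (x (i, j, false)) (x (j, i, true))))%N.

Definition goals_scored n (x : table n) (i : 'I_n) : nat :=
  (\sum_(j < n | j != i) (x (i, j, false) + x (i, j, true)))%N.

Definition goals_conceded n (x : table n) (i : 'I_n) : nat :=
  (\sum_(j < n | j != i) (x (j, i, false) + x (j, i, true)))%N.

Definition goal_difference n (x : table n) (i : 'I_n) : int :=
  (goals_scored x i)%:Z - (goals_conceded x i)%:Z.

Definition ahead n (x : table n) (i j : 'I_n) : bool :=
  (points x j < points x i)%N
  || ((points x i == points x j)
      && ((goal_difference x j < goal_difference x i)%R
          || ((goal_difference x i == goal_difference x j)
              && (goals_scored x j < goals_scored x i)%N))).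

(* A standing is a permutation s : {perm 'I_n}; s r is the team in position r
   (position 0 = top). *)
Definition compatible n (x : table n) (s : {perm 'I_n}) : Prop :=
  forall r r' : 'I_n, (r < r')%N -> ~~ ahead x (s r') (s r).

(* relabelling of teams by p: team p i in the new table has the results of
   team i in the old one *)
Definition relabel n (p : {perm 'I_n}) (x : table n) : table n :=
  [ffun t : 'I_n * 'I_n * bool => x ((p^-1)%g t.1.1, (p^-1)%g t.1.2, t.2)].

(* A (possibly randomized) further tie-breaking rule: for each goal table x,
   q x is a probability distribution on standings, supported on standings
   compatible with the primary criteria S, GD, GS, and treating teams
   symmetrically (equivariant under relabelling of teams). *)
Definition symmetric_tiebreak (R : realType) n (q : table n -> {perm 'I_n} -> R)
  : Prop :=
  [/\ (forall x s, 0 <= q x s),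
      (forall x, valid_table x -> \sum_(s : {perm 'I_n}) q x s = 1),
      (forall x s, valid_table x -> ~ compatible x s -> q x s = 0) &
      (forall (p : {perm 'I_n}) x (s t : {perm 'I_n}),
          (forall r, t r = p (s r)) -> q (relabel p x) t = q x s)].

Definition goals_pmf (R : realType) n (lam : R) (x : table n) : R :=
  \prod_(i < n) \prod_(j < n | j != i) \prod_(k : bool)
     poisson_pmf lam (x (i, j, k)).

Definition standing_prob (R : realType) n (lam : R)
    (q : table n -> {perm 'I_n} -> R) (s : {perm 'I_n}) : \bar R :=
  (\esum_(x in [set x : table n | valid_table x])
      (goals_pmf lam x * q x s)%:E)%E.

Definition perfectly_balanced (R : realType) n (lam : R)
    (q : table n -> {perm 'I_n} -> R) : Prop :=
  forall s t : {perm 'I_n}, standing_prob lam q s = standing_prob lam q t.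

From HB Require Import structures.
From mathcomp Require Import all_boot all_order all_algebra all_fingroup.
From mathcomp Require Import all_classical all_reals all_analysis.
Import Order.TTheory GRing.Theory Num.Theory.
Local Open Scope ring_scope.

(* The joint law of the goal table is a product of identical factors, one per
   ordered pair of distinct teams and venue, so it is invariant under
   relabelling the teams; the ranking rule (S, GD, GS, then a symmetric
   tie-break) is equivariant under relabelling. Hence relabelling by
   [p = s^-1 t] is a probability-preserving bijection of outcomes that turns
   standing [s] into standing [t]. *)

Section Relabel.

Variable n : nat.
Implicit Types (p : {perm 'I_n}) (x : table n).

Lemma relabelK p : cancel (relabel p) (relabel p^-1).
Proof. by move=> x; apply/ffunP => -[[i j] k]; rewrite !ffunE /= invgK !permK. Qed.

Lemma relabelVK p : cancel (relabel p^-1) (relabel p).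
Proof. by have := relabelK p^-1; rewrite invgK. Qed.

Lemma relabel_valid p x : valid_table x -> valid_table (relabel p x).
Proof. by move=> x_valid i k; rewrite ffunE. Qed.

Lemma relabel_bij p :
  set_bij [set x | valid_table x] [set x | valid_table x] (relabel p).
Proof.
split.
- by move=> x; apply: relabel_valid.
- move=> x y _ _; exact: (can_inj (relabelK p)).
- move=> y vy; exists (relabel p^-1 y); last exact: relabelVK.
  exact: relabel_valid.
Qed.

Lemma goals_pmf_relabel (R : realType) (lam : R) p x :
  goals_pmf lam (relabel p x) = goals_pmf lam x.
Proof.
rewrite /goals_pmf (reindex_inj (@perm_inj _ p)); apply: eq_bigr => i _.
rewrite (reindex_inj (@perm_inj _ p)) /=.
apply: eq_big => [j | j _]; first by rewrite (inj_eq (@perm_inj _ p)).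
by apply: eq_bigr => k _; rewrite ffunE /= !permK.
Qed.

Lemma standing_prob_relabel (R : realType) (lam : R)
    (q : table n -> {perm 'I_n} -> R) p (s t : {perm 'I_n}) :
  (forall p' x (s' t' : {perm 'I_n}),
      (forall r, t' r = p' (s' r)) -> q (relabel p' x) t' = q x s') ->
  (forall r, t r = p (s r)) ->
  standing_prob lam q t = standing_prob lam q s.
Proof.
move=> q_equiv tE; rewrite /standing_prob (reindex_esum _ _ _ _ (relabel_bij p)).
by apply: eq_esum => x _; rewrite goals_pmf_relabel (q_equiv p x s t tE).
Qed.

End Relabel.

Theorem theorem2 (R : realType) (n : nat) (lam : R)
    (q : table n -> {perm 'I_n} -> R) :
  (2 <= n)%N -> 0 < lam -> symmetric_tiebreak q ->
  perfectly_balanced lam q.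
Proof.
move=> _ _ [_ _ _ q_equiv] s t.
have tE : forall r, t r = (s^-1 * t)%g (s r) by move=> r; rewrite permM permK.
by rewrite (@standing_prob_relabel n R lam q _ s t q_equiv tE).
Qed.
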